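(* Let $\mathcal{U}\subseteq\mathcal{M}$ be retraction-convex and let $b_0,b_1,b_2,b_3\in\mathcal{U}$. Then the generalized de Casteljau curve $t\mapsto\beta(t;b_0,b_1,b_2,b_3)$ is well-defined for every $t\in[0,1]$.
   Context: $\mathcal{M}$ is a connected Riemannian manifold with norms $\|\cdot\|_x$. $R$ is a retraction: a smooth map from an open subset $\mathcal{O}\subseteq T\mathcal{M}$ containing all zero vectors into $\mathcal{M}$, $R_x(v)=R(x,v)$, with $R_x(0)=x$ and $\mathrm{D}R_x(0)=\mathrm{id}_{T_x\mathcal{M}}$. Fix a continuous $\Delta:\mathcal{M}\to(0,\infty]$ such that $\mathcal{T}=\{(x,v):\|v\|_x<\Delta(x)\}\subseteq\mathcal{O}$ and $E(x,v)=(x,R_x(v))$ is a diffeomorphism from $\mathcal{T}$ onto its image in $\mathcal{M}\times\mathcal{M}$. $R_x(v)$ is well-defined if $(x,v)\in\mathcal{O}$; $R_x^{-1}(y)$ is well-defined when $(x,y)\in E(\mathcal{T})$, equal to the unique $v$ with $E(x,v)=(x,y)$. A set $\mathcal{U}$ is retraction-convex if for all $x,y,z\in\mathcal{U}$: $R_x^{-1}(y)$ is well-defined, and for every $\tau\in[0,1]$, $R_x((1-\tau)R_x^{-1}(y)+\tau R_x^{-1}(z))$ is well-defined and lies in $\mathcal{U}$. Let $c_r(t;x,y)=R_{q(r)}\big((1-t)R_{q(r)}^{-1}(x)+tR_{q(r)}^{-1}(y)\big)$, $q(r)=R_x(rR_x^{-1}(y))$. The generalized de Casteljau curve is $\beta(t;b_0,b_1,b_2,b_3)=\beta_{012}(t,t,t)$,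 where $\beta_0(t)=c_0(t;b_0,b_1)$, $\beta_1(t)=c_{1/2}(t;b_1,b_2)$, $\beta_2(t)=c_1(t;b_2,b_3)$, $\beta_{01}(s,t)=c_0(s;\beta_0(t),\beta_1(t))$, $\beta_{12}(s,t)=c_1(s;\beta_1(t),\beta_2(t))$, $\beta_{012}(u,s,t)=c_t(u;\beta_{01}(s,t),\beta_{12}(s,t))$; it is well-defined when every retraction and inverse retraction in these formulas is well-defined. *)

From HB Require Import structures.
From mathcomp Require Import all_boot all_order all_algebra.
From mathcomp Require Import all_classical all_reals all_analysis.
Import Order.TTheory GRing.Theory Num.Theory.
Import numFieldNormedType.Exports.
Local Open Scope classical_set_scope.
Local Open Scope ring_scope.

Section Retraction.
Context {R : realType} {M : topologicalType} {TM : M -> normedModType R}.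
(* O : the open domain of the retraction; Ret x v = R_x(v) *)
Context (O : forall x : M, set (TM x)) (Ret : forall x : M, TM x -> M)
        (Delta : M -> \bar R).

Definition inT (x : M) (v : TM x) : Prop := (`|v|%:E < Delta x)%E.

Definition R_wd (x : M) (v : TM x) : Prop := O x v.

Definition Rinv_wd (x y : M) : Prop := exists v : TM x, inT x v /\ Ret x v = y.

(* R_x^{-1}(y): the (unique, when well-defined) v with (x,v) in T, R_x(v) = y *)
Definition Rinv (x y : M) : TM x := xget 0 [set v : TM x | inT x v /\ Ret x v = y].

Definition retraction_convex (U : set M) : Prop :=
  forall x y z, U x -> U y -> U z ->
    Rinv_wd x y /\
    forall tau : R, 0 <= tau <= 1 ->
      R_wd x ((1 - tau) *: Rinv x y + tau *: Rinv x z) /\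
      U (Ret x ((1 - tau) *: Rinv x y + tau *: Rinv x z)).

Definition qpt (r : R) (x y : M) : M := Ret x (r *: Rinv x y).
Definition qpt_wd (r : R) (x y : M) : Prop :=
  Rinv_wd x y /\ R_wd x (r *: Rinv x y).

Definition cr (r t : R) (x y : M) : M :=
  let p := qpt r x y in Ret p ((1 - t) *: Rinv p x + t *: Rinv p y).
Definition cr_wd (r t : R) (x y : M) : Prop :=
  let p := qpt r x y in
  qpt_wd r x y /\ Rinv_wd p x /\ Rinv_wd p y /\
  R_wd p ((1 - t) *: Rinv p x + t *: Rinv p y).

Section DeCasteljau.
Variables b0 b1 b2 b3 : M.
Definition beta0 (t : R) := cr 0 t b0 b1.
Definition beta1 (t : R) := cr (2^-1) t b1 b2.
Definition beta2 (t : R) := cr 1 t b2 b3.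
Definition beta01 (s t : R) := cr 0 s (beta0 t) (beta1 t).
Definition beta12 (s t : R) := cr 1 s (beta1 t) (beta2 t).
Definition beta012 (u s t : R) := cr t u (beta01 s t) (beta12 s t).
Definition beta (t : R) := beta012 t t t.

Definition beta_wd (t : R) : Prop :=
  cr_wd 0 t b0 b1 /\ cr_wd (2^-1) t b1 b2 /\ cr_wd 1 t b2 b3 /\
  cr_wd 0 t (beta0 t) (beta1 t) /\ cr_wd 1 t (beta1 t) (beta2 t) /\
  cr_wd t t (beta01 t t) (beta12 t t).
End DeCasteljau.
End Retraction.

From HB Require Import structures.
From mathcomp Require Import all_boot all_order all_algebra.
From mathcomp Require Import all_classical all_reals all_analysis.
Import Order.TTheory GRing.Theory Num.Theory.
Import numFieldNormedType.Exports.
Local Open Scope classical_set_scope.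
Local Open Scope ring_scope.

(* Since R_x^{-1}(x) = 0, the point q(r) = R_x(r R_x^{-1}(y)) is the convex
   combination R_x((1-r) R_x^{-1}(x) + r R_x^{-1}(y)), so it stays in U; then
   c_r(t;x,y) is a convex combination taken at q(r), so it is well-defined and
   stays in U as well.  Every curve of the de Casteljau construction is such a
   c_r with r in [0,1] applied to points already known to lie in U, so the
   construction never leaves U and every step of it is well-defined. *)

Section RetractionConvex.
Context {R : realType} {M : topologicalType} {TM : M -> normedModType R}.
Context {O : forall x : M, set (TM x)} {Ret : forall x : M, TM x -> M}
        {Delta : M -> \bar R}.
Hypothesis Ret0 : forall x : M, Ret x 0 = x.
Hypothesis Delta_gt0 : forall x : M, (0 < Delta x)%E.
Hypothesis Ret_injT : forall (x : M) (v w : TM x),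
  inT Delta x v -> inT Delta x w -> Ret x v = Ret x w -> v = w.

Lemma inT0 (x : M) : inT Delta x (0 : TM x).
Proof. by rewrite /inT normr0. Qed.

Lemma Rinvxx (x : M) : Rinv Ret Delta x x = 0.
Proof.
apply: xget_unique; first by split; [exact: inT0 | exact: Ret0].
by move=> v [Tv Rv]; apply: Ret_injT; rewrite ?Rv ?Ret0 //; exact: inT0.
Qed.

Context {U : set M}.
Hypothesis U_convex : retraction_convex O Ret Delta U.

Lemma qpt_convex (r : R) (x y : M) : 0 <= r <= 1 -> U x -> U y ->
  qpt_wd O Ret Delta r x y /\ U (qpt Ret Delta r x y).
Proof.
move=> r01 Ux Uy; have [Rxy _] := U_convex x y y Ux Uy Uy.
have [_ /(_ r r01)] := U_convex x x y Ux Ux Uy.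
by rewrite Rinvxx scaler0 add0r => -[].
Qed.

Lemma cr_convex (r t : R) (x y : M) : 0 <= r <= 1 -> 0 <= t <= 1 ->
  U x -> U y -> cr_wd O Ret Delta r t x y /\ U (cr Ret Delta r t x y).
Proof.
move=> r01 t01 Ux Uy; have [qwd Uq] := qpt_convex r x y r01 Ux Uy.
have [Rqy _] := U_convex _ y x Uq Uy Ux.
by have [Rqx /(_ t t01) [crwd Ucr]] := U_convex _ x y Uq Ux Uy.
Qed.

End RetractionConvex.

Lemma half_itv01 {R : realType} : 0 <= (2^-1 : R) <= 1.
Proof. by rewrite invr_ge0 ler0n invf_le1 ?ler1n ?ltr0n. Qed.

Theorem proposition3p4 (R : realType) (M : topologicalType)
  (TM : M -> normedModType R) (O : forall x : M, set (TM x))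
  (Ret : forall x : M, TM x -> M) (Delta : M -> \bar R) :
  connected [set: M] ->
  (forall x : M, O x 0) ->
  (forall x : M, Ret x 0 = x) ->
  continuous Delta ->
  (forall x : M, (0 < Delta x)%E) ->
  (forall (x : M) (v : TM x), inT Delta x v -> O x v) ->
  (forall (x : M) (v w : TM x), inT Delta x v -> inT Delta x w ->
      Ret x v = Ret x w -> v = w) ->
  forall (U : set M), retraction_convex O Ret Delta U ->
  forall b0 b1 b2 b3 : M, U b0 -> U b1 -> U b2 -> U b3 ->
  forall t : R, 0 <= t <= 1 -> beta_wd O Ret Delta b0 b1 b2 b3 t.
Proof.
move=> _ _ Ret0 _ Delta_gt0 _ Ret_injT U Uconv b0 b1 b2 b3 U0 U1 U2 U3 t t01.
have cr_U := cr_convex Ret0 Delta_gt0 Ret_injT Uconv.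
have i0 : 0 <= (0 : R) <= 1 by rewrite lexx ler01.
have i1 : 0 <= (1 : R) <= 1 by rewrite lexx ler01.
have [w0 U0'] := cr_U _ _ _ _ i0 t01 U0 U1.
have [w1 U1'] := cr_U _ _ _ _ half_itv01 t01 U1 U2.
have [w2 U2'] := cr_U _ _ _ _ i1 t01 U2 U3.
have [w01 U01] := cr_U _ _ _ _ i0 t01 U0' U1'.
have [w12 U12] := cr_U _ _ _ _ i1 t01 U1' U2'.
have [w012 _] := cr_U _ _ _ _ t01 t01 U01 U12.
by split; [|split; [|split; [|split; [|split]]]].
Qed.
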